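(* Let $\lambda\in\mathbb R$ (including $\lambda=0$) and $\alpha,\beta\in\mathbb R$ with $\tau\bar\tau=\alpha^2-\lambda\beta^2\neq0$. Let $\mathbf p=(p^0,p^1,p^2),\mathbf q=(q^0,q^1,q^2)\in\mathbb R^3$ with $p_a=\eta_{ab}p^b$, $q_a=\eta_{ab}q^b$, $\mathbf p^2=\eta_{ab}p^ap^b$, $\mathbf q^2=\eta_{ab}q^aq^b$, $\mathbf p\cdot\mathbf q=\eta_{ab}p^aq^b$. If $$\mathbf p^2+\lambda\,\mathbf q^2=-\mu,\qquad 2\,\mathbf p\cdot\mathbf q=-\nu,$$ then $$r=K_\tau+\epsilon^{abc}\Big(p_a\,(P_b\otimes J_c+J_b\otimes P_c)+q_a\,(P_b\otimes P_c+\lambda\,J_b\otimes J_c)\Big)$$ satisfies the classical Yang–Baxter equation $[[r,r]]=0$ in $\mathfrak g_\lambda$, i.e. it is a compatible $r$-matrix.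
   Context: Let $\mathfrak g$ denote either $so(3)$ or $so(2,1)$, with basis $J_0,J_1,J_2$ and metric $\eta=\mathrm{diag}(1,1,1)$ (for $so(3)$) or $\eta=\mathrm{diag}(1,-1,-1)$ (for $so(2,1)$); indices are raised and lowered with $\eta$, summation over repeated indices is implied, $\epsilon_{abc}$ is totally antisymmetric with $\epsilon_{012}=\epsilon^{012}=1$. For $\lambda\in\mathbb R$, $\mathfrak g_\lambda$ is the real six-dimensional Lie algebra with basis $J_a,P_a$ ($a=0,1,2$) and brackets $[J_a,J_b]=\epsilon_{abc}J^c$, $[J_a,P_b]=\epsilon_{abc}P^c$, $[P_a,P_b]=\lambda\epsilon_{abc}J^c$. For real $\alpha,\beta$ with $\tau\bar\tau:=\alpha^2-\lambda\beta^2\neq0$ set $K_\tau=\frac{\alpha}{\tau\bar\tau}(J_a\otimes P^a+P_a\otimes J^a)-\frac{\beta}{\tau\bar\tau}(\lambda J_a\otimes J^a+P_a\otimes P^a)$, $\mu=\frac{\alpha^2+\lambda\beta^2}{(\tau\bar\tau)^2}$, $\nu=-\frac{2\alpha\beta}{(\tau\bar\tau)^2}$. For $r=\sum_i x_i\otimes y_i\in\mathfrak g_\lambda\otimes\mathfrak g_\lambda$ put $r_{12}=\sum_i x_i\otimes y_i\otimes1$, $r_{13}=\sum_i x_i\otimes1\otimes y_i$, $r_{23}=\sum_i1\otimes x_i\otimes y_i$ and $[[r,r]]=[r_{12},r_{13}]+[r_{12},r_{23}]+[r_{13},r_{23}]$. A compatible $r$-matrix is an $r=r'+K_\tau$ with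 $r'$ antisymmetric and $[[r,r]]=0$. *)

From Stdlib Require Import Reals.
Open Scope R_scope.

Inductive idx3 := I0 | I1 | I2.

Definition sum3 (f : idx3 -> R) : R := f I0 + f I1 + f I2.

(* Which real form: so(3) (eta = diag(1,1,1)) or so(2,1) (eta = diag(1,-1,-1)). *)
Inductive form := SO3 | SO21.

(* diagonal entries of eta (= those of its inverse) *)
Definition eta (k : form) (a : idx3) : R :=
  match a, k with
  | I0, _ => 1
  | _, SO3 => 1
  | _, SO21 => -1
  end.

(* totally antisymmetric symbol, eps 0 1 2 = 1 (same numbers for upper and lower indices) *)
Definition eps (a b c : idx3) : R :=
  match a, b, c with
  | I0, I1, I2 => 1 | I1, I2, I0 => 1 | I2, I0, I1 => 1
  | I0, I2, I1 => -1 | I2, I1, I0 => -1 | I1, I0, I2 => -1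
  | _, _, _ => 0
  end.

Inductive gen := J (a : idx3) | P (a : idx3).

Definition sumG (f : gen -> R) : R := sum3 (fun a => f (J a)) + sum3 (fun a => f (P a)).

Definition vec := gen -> R.
Definition ebasis (x : gen) : vec := fun y =>
  match x, y with
  | J a, J b | P a, P b =>
      match a, b with I0, I0 | I1, I1 | I2, I2 => 1 | _, _ => 0 end
  | _, _ => 0
  end.
Definition vscale (c : R) (v : vec) : vec := fun y => c * v y.
(* raised-index basis elements J^a = eta^{aa} J_a, P^a = eta^{aa} P_a *)
Definition Ju (k : form) (a : idx3) : vec := vscale (eta k a) (ebasis (J a)).
Definition Pu (k : form) (a : idx3) : vec := vscale (eta k a) (ebasis (P a)).

(* Lie bracket on basis elements, as a coefficient vector:
   [J_a,J_b] = eps_abc J^c, [J_a,P_b] = eps_abc P^c, [P_a,P_b] = lam eps_abc J^c *)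
Definition brk (k : form) (lam : R) (x y : gen) : vec := fun z =>
  match x, y, z with
  | J a, J b, J c => eps a b c * eta k c
  | J a, P b, P c => eps a b c * eta k c
  | P a, J b, P c => - (eps b a c * eta k c)
  | P a, P b, J c => lam * eps a b c * eta k c
  | _, _, _ => 0
  end.

Definition tens2 := gen -> gen -> R.
Definition tprod (u v : vec) : tens2 := fun x y => u x * v y.
Definition tadd (s t : tens2) : tens2 := fun x y => s x y + t x y.
Definition tsub (s t : tens2) : tens2 := fun x y => s x y - t x y.
Definition tscale (c : R) (t : tens2) : tens2 := fun x y => c * t x y.
Definition tsum3 (f : idx3 -> tens2) : tens2 := fun x y => sum3 (fun a => f a x y).
Definition tzero : tens2 := fun _ _ => 0.

Definition antisymmetric (t : tens2) : Prop := forall x y, t x y = - t y x.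

(* [[r,r]] = [r12,r13] + [r12,r23] + [r13,r23] for r = sum_{x,y} r(x,y) e_x (x) e_y,
   expanded by bilinearity; component along e_k (x) e_l (x) e_m. *)
Definition CYB (k : form) (lam : R) (r : tens2) (ek el em : gen) : R :=
  sumG (fun i => sumG (fun i' => r i el * r i' em * brk k lam i i' ek))
  + sumG (fun j => sumG (fun i' => r ek j * r i' em * brk k lam j i' el))
  + sumG (fun j => sumG (fun j' => r ek j * r el j' * brk k lam j j' em)).

Definition ttbar (lam alpha beta : R) : R := alpha ^ 2 - lam * beta ^ 2.

Definition Ktau (k : form) (lam alpha beta : R) : tens2 :=
  tadd
    (tscale (alpha / ttbar lam alpha beta)
       (tsum3 (fun a => tadd (tprod (ebasis (J a)) (Pu k a)) (tprod (ebasis (P a)) (Ju k a)))))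
    (tscale (- (beta / ttbar lam alpha beta))
       (tsum3 (fun a => tadd (tscale lam (tprod (ebasis (J a)) (Ju k a)))
                             (tprod (ebasis (P a)) (Pu k a))))).

Definition mu (lam alpha beta : R) : R :=
  (alpha ^ 2 + lam * beta ^ 2) / (ttbar lam alpha beta) ^ 2.
Definition nu (lam alpha beta : R) : R :=
  - (2 * alpha * beta) / (ttbar lam alpha beta) ^ 2.

(* eta-products of 3-vectors given by contravariant components p^a *)
Definition dot (k : form) (p q : idx3 -> R) : R := sum3 (fun a => eta k a * p a * q a).
Definition lower (k : form) (p : idx3 -> R) : idx3 -> R := fun a => eta k a * p a.

Definition rprime (k : form) (lam : R) (p q : idx3 -> R) : tens2 :=
  tsum3 (fun a => tsum3 (fun b => tsum3 (fun c =>
    tscale (eps a b c)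
      (tadd
        (tscale (lower k p a)
           (tadd (tprod (ebasis (P b)) (ebasis (J c))) (tprod (ebasis (J b)) (ebasis (P c)))))
        (tscale (lower k q a)
           (tadd (tprod (ebasis (P b)) (ebasis (P c)))
                 (tscale lam (tprod (ebasis (J b)) (ebasis (J c)))))))))).

Definition rmat (k : form) (lam alpha beta : R) (p q : idx3 -> R) : tens2 :=
  tadd (Ktau k lam alpha beta) (rprime k lam p q).

Definition compatible_rmatrix (k : form) (lam alpha beta : R) (r : tens2) : Prop :=
  antisymmetric (tsub r (Ktau k lam alpha beta)) /\
  forall x y z, CYB k lam r x y z = 0.

(* With A = alpha/(tau taubar) and B = beta/(tau taubar), the four blocks of r are
   the 3x3 matrices  eps(p) + A eta  (for P(x)J and J(x)P),  eps(q) - B eta  (for P(x)P)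
   and  lam (eps(q) - B eta)  (for J(x)J),  where eps(v)_bc = eps_abc v^a.  Every
   component of [[r,r]] is then a combination, with coefficients in {1, lam}, of
   p^2 + lam q^2 + A^2 + lam B^2  and  p.q - A B,  and the hypotheses say precisely
   that both vanish, since mu = A^2 + lam B^2 and nu = -2 A B. *)
From Stdlib Require Import Reals Lra.
Open Scope R_scope.

Definition eta_mx (k : form) (b c : idx3) : R :=
  match b, c with
  | I0, I0 => eta k I0 | I1, I1 => eta k I1 | I2, I2 => eta k I2
  | _, _ => 0
  end.

Definition eps_mx (v : idx3 -> R) (b c : idx3) : R :=
  match b, c with
  | I0, I1 => v I2 | I1, I0 => - v I2
  | I1, I2 => v I0 | I2, I1 => - v I0
  | I2, I0 => v I1 | I0, I2 => - v I1
  | _, _ => 0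
  end.

Definition rmat_blocks (k : form) (lam A B : R) (p q : idx3 -> R) : tens2 :=
  fun x y =>
  match x, y with
  | P b, J c | J b, P c => eps_mx (lower k p) b c + A * eta_mx k b c
  | P b, P c => eps_mx (lower k q) b c - B * eta_mx k b c
  | J b, J c => lam * (eps_mx (lower k q) b c - B * eta_mx k b c)
  end.

Lemma rmat_blocksE k lam alpha beta p q x y :
  rmat k lam alpha beta p q x y =
  rmat_blocks k lam (alpha / ttbar lam alpha beta) (beta / ttbar lam alpha beta) p q x y.
Proof.
unfold rmat, Ktau, rmat_blocks.
generalize (alpha / ttbar lam alpha beta) (beta / ttbar lam alpha beta); intros A B.
destruct k, x as [[]|[]], y as [[]|[]];
  cbv [eps_mx eta_mx lower rprime sum3 tadd tscale tsum3 tprod ebasis Pu Ju vscale eps eta];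
  ring.
Qed.

Lemma CYB_ext k lam (r r' : tens2) :
  (forall x y, r x y = r' x y) -> forall x y z, CYB k lam r x y z = CYB k lam r' x y z.
Proof. intros Hr x y z; cbv [CYB sumG sum3]; rewrite !Hr; reflexivity. Qed.

Lemma CYB_rmat_blocks k (lam A B : R) (p q : idx3 -> R) x y z :
  dot k p p + lam * dot k q q = - (A ^ 2 + lam * B ^ 2) ->
  dot k p q = A * B ->
  CYB k lam (rmat_blocks k lam A B p q) x y z = 0.
Proof.
intros Hnorm Hdot.
(* The components involving J(x)J blocks need the constraints multiplied by lam. *)
pose proof (f_equal (Rmult lam) Hnorm) as Hnorm_lam.
pose proof (f_equal (Rmult lam) Hdot) as Hdot_lam.
destruct k; cbv [dot sum3 eta] in Hnorm, Hdot, Hnorm_lam, Hdot_lam;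
  destruct x as [[]|[]], y as [[]|[]], z as [[]|[]];
  cbv [CYB sumG sum3 rmat_blocks eps_mx eta_mx lower brk eps eta];
  lra.
Qed.

Lemma rmat_sub_Ktau_antisymmetric k lam alpha beta p q :
  antisymmetric (tsub (rmat k lam alpha beta p q) (Ktau k lam alpha beta)).
Proof.
intros x y; unfold tsub, rmat, tadd at 1.
destruct k, x as [[]|[]], y as [[]|[]];
  cbv [lower rprime sum3 tadd tscale tsum3 tprod ebasis eps eta]; ring.
Qed.

Lemma muE lam alpha beta : ttbar lam alpha beta <> 0 ->
  mu lam alpha beta =
  (alpha / ttbar lam alpha beta) ^ 2 + lam * (beta / ttbar lam alpha beta) ^ 2.
Proof. intros Htt; unfold mu; field; exact Htt. Qed.

Lemma nuE lam alpha beta : ttbar lam alpha beta <> 0 ->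
  nu lam alpha beta = - 2 * (alpha / ttbar lam alpha beta) * (beta / ttbar lam alpha beta).
Proof. intros Htt; unfold nu; field; exact Htt. Qed.

Theorem mainTheorem3 (k : form) (lam alpha beta : R) (p q : idx3 -> R) :
  ttbar lam alpha beta <> 0 ->
  dot k p p + lam * dot k q q = - mu lam alpha beta ->
  2 * dot k p q = - nu lam alpha beta ->
  (forall x y z, CYB k lam (rmat k lam alpha beta p q) x y z = 0) /\
  compatible_rmatrix k lam alpha beta (rmat k lam alpha beta p q).
Proof.
intros Htt Hnorm Hdot.
rewrite (muE _ _ _ Htt) in Hnorm; rewrite (nuE _ _ _ Htt) in Hdot.
assert (HCYB : forall x y z, CYB k lam (rmat k lam alpha beta p q) x y z = 0).
{ intros x y z; rewrite (CYB_ext k lam _ _ (rmat_blocksE k lam alpha beta p q)).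
  apply CYB_rmat_blocks; [exact Hnorm | lra]. }
split; [exact HCYB | split; [apply rmat_sub_Ktau_antisymmetric | exact HCYB]].
Qed.
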